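(* Let $n\geq 2$ and let $(\mu_0^n,\cdot,[-,-])$ be a Poisson algebra structure on the associative algebra $\mu_0^n$. Then it is a trivial Poisson algebra; namely $[e_i,e_j]=0$ for all $1\leq i,j\leq n$.
   Context: $\mu_0^n$ is the complex commutative associative algebra with basis $\{e_1,\dots,e_n\}$ and $e_i\cdot e_j=e_{i+j}$ for $2\leq i+j\leq n$, other products zero. A Poisson algebra is a triple $(\mathfrak{L},\cdot,[-,-])$ with $(\mathfrak{L},\cdot)$ commutative associative, $(\mathfrak{L},[-,-])$ a Lie algebra, and $[x,y\cdot z]=[x,y]\cdot z+y\cdot[x,z]$ for all $x,y,z$. It is trivial if $\mathfrak{L}\cdot\mathfrak{L}=0$ or $[\mathfrak{L},\mathfrak{L}]=0$. *)

From HB Require Import structures.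
From mathcomp Require Import all_boot all_order all_algebra.
From mathcomp Require Import reals.
From mathcomp Require Import complex.
Set Implicit Arguments. Unset Strict Implicit. Unset Printing Implicit Defensive.
Import Order.TTheory GRing.Theory Num.Theory.
Local Open Scope ring_scope.

(* The complex numbers are modelled as R[i] for an arbitrary real field
   R : realType (all realTypes are isomorphic to the reals). *)
Notation Cx R := (complex (Real.sort R)).

(* Elements of mu_0^n are row vectors 'rV[C]_n; the ordinal i : 'I_n
   stands for the basis vector e_(i+1). *)
Definition ebasis (C : nzRingType) (n : nat) (i : 'I_n) : 'rV[C]_n :=
  delta_mx 0 i.

(* The product of mu_0^n: e_a . e_b = e_(a+b) if a+b <= n, 0 otherwise.
   With 0-based indices i (= a-1), j (= b-1), the product lands at
   index k = i + j + 1 (= a + b - 1). *)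
Definition mu0_mul (C : nzRingType) (n : nat) (x y : 'rV[C]_n) : 'rV[C]_n :=
  \row_(k < n) \sum_(i < n) \sum_(j < n)
     (if (i + j).+1 == k :> nat then x 0 i * y 0 j else 0).

Definition is_poisson_bracket (C : comNzRingType) (n : nat)
    (br : 'rV[C]_n -> 'rV[C]_n -> 'rV[C]_n) : Prop :=
  [/\ (forall a x y z, br (a *: x + y) z = a *: br x z + br y z),
      (forall a x y z, br x (a *: y + z) = a *: br x y + br x z),
      (forall x, br x x = 0),
      (forall x y z, br x (br y z) + br y (br z x) + br z (br x y) = 0)
    & (forall x y z, br x (mu0_mul y z)
                     = mu0_mul (br x y) z + mu0_mul y (br x z))].

(* e_1 generates mu_0^n, since e_(k+1) = e_1 . e_k.  For fixed x the map
   [x, -] is a derivation of mu_0^n by the Leibniz rule, so it vanishes as soon as it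
   kills e_1.  Now [e_1, e_1] = 0, hence [e_1, -] = 0; by antisymmetry every [e_i, -]
   kills e_1, hence vanishes. *)
From HB Require Import structures.
From mathcomp Require Import all_boot all_order all_algebra.
From mathcomp Require Import reals.
From mathcomp Require Import complex.
Set Implicit Arguments. Unset Strict Implicit. Unset Printing Implicit Defensive.
Import GRing.Theory.
Local Open Scope ring_scope.

Definition mu0_derivation (C : nzRingType) (n : nat) (D : 'rV[C]_n -> 'rV[C]_n) : Prop :=
  forall y z, D (mu0_mul y z) = mu0_mul (D y) z + mu0_mul y (D z).

Section Mu0Algebra.

Variable C : nzRingType.

Lemma mu0_mul0r n (y : 'rV[C]_n) : mu0_mul 0 y = 0.
Proof.
apply/rowP => m; rewrite !mxE; apply: big1 => i _; apply: big1 => j _.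
by rewrite mxE mul0r; case: ifP.
Qed.

Lemma mu0_mulr0 n (y : 'rV[C]_n) : mu0_mul y 0 = 0.
Proof.
apply/rowP => m; rewrite !mxE; apply: big1 => i _; apply: big1 => j _.
by rewrite mxE mulr0; case: ifP.
Qed.

Lemma mu0_mul_ebasis0 n (k k' : 'I_n.+1) : val k' = (val k).+1 ->
  mu0_mul (ebasis C ord0) (ebasis C k) = ebasis C k'.
Proof.
move=> k'E; apply/rowP => m; rewrite /ebasis !mxE.
rewrite (bigD1 ord0) //= [X in _ + X]big1 ?addr0 => [|i i_neq0]; last first.
  by apply: big1 => j _; rewrite !mxE (negbTE i_neq0) andbF mul0r; case: ifP.
rewrite (bigD1 k) //= [X in _ + X]big1 ?addr0 => [|j j_neqk]; last first.
  by rewrite !mxE (negbTE j_neqk) andbF mulr0; case: ifP.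
rewrite !mxE !eqxx mulr1 add0n -k'E val_eqE eq_sym.
by case: (m == k').
Qed.

Lemma mu0_derivation_eq0 n (D : 'rV[C]_n.+1 -> 'rV[C]_n.+1) :
  mu0_derivation D -> D (ebasis C ord0) = 0 -> forall i, D (ebasis C i) = 0.
Proof.
move=> derD De0 [i lt_in]; elim: i lt_in => [|i IHi] lt_in.
  by rewrite (_ : Ordinal lt_in = ord0) //; apply: val_inj.
have lt_i_n : (i < n.+1)%N by apply: ltnW.
rewrite -(@mu0_mul_ebasis0 _ (Ordinal lt_i_n)) // derD De0 IHi.
by rewrite mu0_mul0r mu0_mulr0 addr0.
Qed.

End Mu0Algebra.

Section PoissonBracket.

Variables (C : comNzRingType) (n : nat) (br : 'rV[C]_n -> 'rV[C]_n -> 'rV[C]_n).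
Hypothesis br_poisson : is_poisson_bracket br.

Lemma poisson_bracket_derivation x : mu0_derivation (br x).
Proof. by case: br_poisson => _ _ _ _ brM y z; apply: brM. Qed.

Lemma poisson_bracketC x y : br y x = - br x y.
Proof.
case: br_poisson => brDl brDr brxx _ _.
have brD1l z u v : br (u + v) z = br u z + br v z.
  by have := brDl 1 u v z; rewrite !scale1r.
have brD1r z u v : br z (u + v) = br z u + br z v.
  by have := brDr 1 z u v; rewrite !scale1r.
apply/eqP; rewrite -addr_eq0 addrC; apply/eqP.
by have := brxx (x + y); rewrite brD1l !brD1r !brxx add0r addr0.
Qed.

End PoissonBracket.

Theorem mainTheorem5 (R : realType) (n : nat) (hn : (2 <= n)%N)
    (br : 'rV[Cx R]_n -> 'rV[Cx R]_n -> 'rV[Cx R]_n) :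
  is_poisson_bracket br ->
  forall i j : 'I_n, br (ebasis _ i) (ebasis _ j) = 0.
Proof.
case: n hn br => [//|n] _ br br_poisson i.
have br_e0 : forall j, br (ebasis _ ord0) (ebasis _ j) = 0.
  apply: mu0_derivation_eq0; first exact: poisson_bracket_derivation.
  by case: br_poisson.
apply: mu0_derivation_eq0; first exact: poisson_bracket_derivation.
by rewrite poisson_bracketC // br_e0 oppr0.
Qed.
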